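(* Let $K$ be a field of characteristic zero, $W_n$ the Witt Lie algebra and $\sigma\in\mathrm{Aut}_{\mathrm{Lie}}(W_n)$. Then for every $\alpha\in\mathbb{Z}^n$ (viewed as a column vector) one has $\sigma(x^\alpha\mathcal{H}_n)=x^{A_{\sigma^{-1}}\alpha}\mathcal{H}_n$; in particular $A_{\sigma^{-1}}\alpha\in\mathbb{Z}^n$.
   Context: $W_n=\mathrm{Der}_K(K[x_1^{\pm1},\ldots,x_n^{\pm1}])=\bigoplus_{\alpha\in\mathbb{Z}^n}x^\alpha\mathcal{H}_n$, $x^\alpha=x_1^{\alpha_1}\cdots x_n^{\alpha_n}$, $\mathcal{H}_n=\bigoplus_iKH_i$, $H_i=x_i\partial_i$. Every Lie automorphism $\tau$ of $W_n$ satisfies $\tau(\mathcal{H}_n)=\mathcal{H}_n$, so there is a unique matrix $A_\tau=(a_{ij})\in\mathrm{GL}_n(K)$ with $\tau(H_i)=\sum_j a_{ij}H_j$ for all $i$, i.e. $\tau(H)=A_\tau H$ with $H=(H_1,\ldots,H_n)^T$. *)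

From HB Require Import structures.
From mathcomp Require Import all_boot all_order all_algebra.
From mathcomp Require Import finmap monalg.
Set Implicit Arguments. Unset Strict Implicit. Unset Printing Implicit Defensive.
Import Order.TTheory GRing.Theory Num.Theory.
Local Open Scope ring_scope.

(* Index of the basis element x^alpha H_i of W_n: the pair (alpha, i),
   alpha in Z^n as a column vector. *)
Definition wkey (n : nat) : choiceType := ('cV[int]_n * 'I_n)%type.

(* W_n = ⊕_{alpha} x^alpha H_n, as the K-vector space with basis
   { x^alpha H_i }, i.e. finitely supported functions Z^n x {1..n} -> K. *)
Definition Witt (K : fieldType) (n : nat) := {malg K[wkey n]}.

Definition wbasis (K : fieldType) (n : nat) (alpha : 'cV[int]_n) (i : 'I_n)
  : Witt K n := << (alpha, i) >>.

(* H_i = x_i d_i = x^0 H_i *)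
Definition wH (K : fieldType) (n : nat) (i : 'I_n) : Witt K n := wbasis K 0 i.

(* Bracket of basis elements, from the derivation action:
   [x^a H_i, x^b H_j] = b_i x^(a+b) H_j - a_j x^(a+b) H_i. *)
Definition wbr_basis (K : fieldType) (n : nat) (k1 k2 : wkey n) : Witt K n :=
  let: (a, i) := k1 in let: (b, j) := k2 in
  (b i 0)%:~R *: wbasis K (a + b) j - (a j 0)%:~R *: wbasis K (a + b) i.

Definition wbr (K : fieldType) (n : nat) (f g : Witt K n) : Witt K n :=
  \sum_(k1 <- msupp f) \sum_(k2 <- msupp g)
     (f@_k1 * g@_k2) *: wbr_basis K k1 k2.

Definition lie_hom (K : fieldType) (n : nat) (s : {linear Witt K n -> Witt K n}) :=
  forall f g, s (wbr f g) = wbr (s f) (s g).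

Definition in_xH (K : fieldType) (n : nat) (alpha : 'cV[int]_n) (f : Witt K n) :=
  forall k, k \in msupp f -> k.1 = alpha.

(* The matrix A_tau: tau(H_i) = sum_j a_ij H_j, so a_ij is the coefficient of
   x^0 H_j in tau(H_i) (tau(H_n) = H_n for every automorphism). *)
Definition Amat (K : fieldType) (n : nat) (t : Witt K n -> Witt K n) : 'M[K]_n :=
  \matrix_(i, j) (t (wH K i))@_((0 : 'cV[int]_n), j).

From HB Require Import structures.
From mathcomp Require Import all_boot all_order all_algebra sesquilinear.
From mathcomp Require Import finmap monalg.
Set Implicit Arguments. Unset Strict Implicit. Unset Printing Implicit Defensive.
Import Order.TTheory GRing.Theory Num.Theory.
Local Open Scope ring_scope.

(* An automorphism preserves the Cartan subalgebra H_n because H_n consists of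
   the ad-locally finite elements.  For h = sum_j d_j H_j, ad h acts on x^b H_j
   by the scalar sum_j d_j b_j, so it is diagonalisable.  Conversely, if h has a
   nonzero component in a degree a that is maximal for the lexicographic order
   (or for its reverse) and a > 0, then the iterates of ad h on a suitable
   x^b (sum_j d_j H_j) have nonzero leading terms in the strictly increasing
   degrees b + m a (characteristic zero keeps the leading coefficients
   nonzero), so no nonzero polynomial in ad h kills it.  Hence
   sigma(H_i) = sum_j a_ij H_j, and applying sigma to [H_i, f] = alpha_i f for
   f in x^alpha H_n shows that every degree beta occurring in sigma(f) satisfies
   A_sigma beta = alpha. *)

Lemma malgUZ (T : choiceType) (R : ringType) (c : R) (k : T) :
  << c *g k >> = c *: (<< k >> : {malg R[T]}).
Proof. by apply/malgP => k'; rewrite mcoeffZ !mcoeffU mulr_natr. Qed.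

Section Bracket.
Variables (K : fieldType) (n : nat).
Implicit Types (f g h : Witt K n) (k : wkey n) (P Q R : pred 'cV[int]_n).

Lemma wbr_fsubset f g (d1 d2 : {fset wkey n}) :
  (msupp f `<=` d1)%fset -> (msupp g `<=` d2)%fset ->
  wbr f g = \sum_(k1 <- d1) \sum_(k2 <- d2) (f@_k1 * g@_k2) *: wbr_basis K k1 k2.
Proof.
move=> s1 s2; rewrite /wbr (big_fset_incl _ s1) /=; last first.
  by move=> k _ /mcoeff_outdom ->; rewrite big1 // => k2 _; rewrite mul0r scale0r.
apply: eq_bigr => k1 _; apply: big_fset_incl s2 _ => k _ /mcoeff_outdom ->.
by rewrite mulr0 scale0r.
Qed.

Lemma wbr_is_bilinear : bilinear_for
  (GRing.Scale.Law.clone _ _ *:%R _) (GRing.Scale.Law.clone _ _ *:%R _) (@wbr K n).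
Proof.
have supp_lin c f1 f2 : (msupp (c *: f1 + f2) `<=` msupp f1 `|` msupp f2)%fset.
  by rewrite (fsubset_trans (msuppD_le _ _)) ?fsetUSS ?msuppZ_le.
split=> [g|f] c f1 f2 /=.
- rewrite (wbr_fsubset (supp_lin c f1 f2) (fsubset_refl _)).
  rewrite (wbr_fsubset (fsubsetUl _ (msupp f2)) (fsubset_refl _)).
  rewrite (wbr_fsubset (fsubsetUr (msupp f1) _) (fsubset_refl _)).
  rewrite scaler_sumr -big_split; apply: eq_bigr => k1 _.
  rewrite scaler_sumr -big_split; apply: eq_bigr => k2 _.
  by rewrite mcoeffD mcoeffZ scalerA mulrDl mulrA scalerDl.
- rewrite (wbr_fsubset (fsubset_refl _) (supp_lin c f1 f2)).
  rewrite (wbr_fsubset (fsubset_refl _) (fsubsetUl _ (msupp f2))).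
  rewrite (wbr_fsubset (fsubset_refl _) (fsubsetUr (msupp f1) _)).
  rewrite scaler_sumr -big_split; apply: eq_bigr => k1 _.
  rewrite scaler_sumr -big_split; apply: eq_bigr => k2 _.
  by rewrite mcoeffD mcoeffZ scalerA mulrDr mulrCA scalerDl.
Qed.

HB.instance Definition _ := bilinear_isBilinear.Build K (Witt K n) (Witt K n) (Witt K n)
  _ _ (@wbr K n) wbr_is_bilinear.

Definition ad h : Witt K n -> Witt K n := wbr h.

HB.instance Definition _ h := GRing.isLinear.Build K (Witt K n) (Witt K n) *:%R (ad h)
  (fun c => linearPr (@wbr K n) h c).

Lemma wbrZl c f g : wbr (c *: f) g = c *: wbr f g.
Proof. exact: linearZl_LR. Qed.

Lemma wbrZr c f g : wbr f (c *: g) = c *: wbr f g.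
Proof. exact: linearZr_LR. Qed.

Lemma wbrDl f1 f2 g : wbr (f1 + f2) g = wbr f1 g + wbr f2 g.
Proof. exact: linearDl. Qed.

Lemma wbrDr f g1 g2 : wbr f (g1 + g2) = wbr f g1 + wbr f g2.
Proof. exact: linearDr. Qed.

Lemma wbr_suml (I : Type) (r : seq I) (F : I -> Witt K n) g :
  wbr (\sum_(i <- r) F i) g = \sum_(i <- r) wbr (F i) g.
Proof. exact: linear_sumlz. Qed.

Lemma wbr_sumr (I : Type) (r : seq I) f (F : I -> Witt K n) :
  wbr f (\sum_(i <- r) F i) = \sum_(i <- r) wbr f (F i).
Proof. exact: linear_sumr. Qed.

Lemma wbr_wbasis (a b : 'cV[int]_n) (i j : 'I_n) :
  wbr (wbasis K a i) (wbasis K b j) =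
  ((b i 0)%:~R : K) *: wbasis K (a + b) j - ((a j 0)%:~R : K) *: wbasis K (a + b) i.
Proof.
rewrite /wbasis (wbr_fsubset msuppU_le msuppU_le) !big_seq_fset1.
by rewrite !mcoeffUU mulr1 scale1r.
Qed.

Definition degs_in P f := forall k, k \in msupp f -> P k.1.

Lemma degs_inU P k : P k.1 -> degs_in P << k >>.
Proof. by move=> Pk k' /(fsubsetP msuppU_le); rewrite inE => /eqP ->. Qed.

Lemma degs_inZ P c f : degs_in P f -> degs_in P (c *: f).
Proof. by move=> Pf k /(fsubsetP (msuppZ_le _ _)) /Pf. Qed.

Lemma degs_inD P f g : degs_in P f -> degs_in P g -> degs_in P (f + g).
Proof.
by move=> Pf Pg k /(fsubsetP (msuppD_le _ _)); rewrite inE => /orP[/Pf|/Pg].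
Qed.

Lemma degs_inB P f g : degs_in P f -> degs_in P g -> degs_in P (f - g).
Proof. by move=> Pf Pg; rewrite -scaleN1r; apply/degs_inD/degs_inZ. Qed.

Lemma degs_in_sum P (I : eqType) (r : seq I) (F : I -> Witt K n) :
  (forall i, i \in r -> degs_in P (F i)) -> degs_in P (\sum_(i <- r) F i).
Proof.
move=> Fr; rewrite big_seq; elim/big_rec: _ => [k|i g ir]; first by rewrite msupp0.
exact/degs_inD/Fr.
Qed.

Lemma mcoeff_degs_out P f k : degs_in P f -> ~~ P k.1 -> f@_k = 0.
Proof. by move=> Pf Pk; apply: mcoeff_outdom; apply: contra Pk => /Pf. Qed.

Lemma degs_in_wbr P Q R f g :
  (forall x y, P x -> Q y -> R (x + y)) ->
  degs_in P f -> degs_in Q g -> degs_in R (wbr f g).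
Proof.
move=> PQR Pf Qg; apply: degs_in_sum => -[a i] /Pf Pa; apply: degs_in_sum => -[b j] /Qg Qb.
apply/degs_inZ/degs_inB; apply/degs_inZ/degs_inU; exact: PQR.
Qed.

End Bracket.

Section LocallyFinite.
Variable K : fieldType.

Definition poly_act (V : lmodType K) (L : V -> V) (p : {poly K}) (v : V) : V :=
  \sum_(i < size p) p`_i *: iter i L v.

Definition locally_finite (V : lmodType K) (L : V -> V) :=
  forall v, exists2 p : {poly K}, p != 0 & poly_act L p v = 0.

Lemma locally_finite_conj (V W : lmodType K) (s : {linear V -> W}) (t : W -> V)
    (L : V -> V) (M : W -> W) :
  cancel t s -> (forall v, s (L v) = M (s v)) -> locally_finite L -> locally_finite M.
Proof.
move=> tK sLM Lfin w; have [p p0 pL] := Lfin (t w); exists p => //.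
have s_iter i v : s (iter i L v) = iter i M (s v) by elim: i => //= i <-.
have := congr1 s pL; rewrite linear0 linear_sum => <-.
by apply: eq_bigr => i _; rewrite linearZ /= s_iter tK.
Qed.

Lemma poly_act_diag (T : choiceType) (L : {linear {malg K[T]} -> {malg K[T]}})
    (lam : T -> K) p F :
  (forall k, L << k >> = lam k *: << k >>) ->
  poly_act L p F = \sum_(k <- msupp F) (F@_k * p.[lam k]) *: << k >>.
Proof.
move=> Lk.
have iterF i : iter i L F = \sum_(k <- msupp F) (F@_k * lam k ^+ i) *: << k >>.
  elim: i => [|i /= ->].
    by rewrite /= {1}(monalgE F); apply: eq_bigr => k _; rewrite expr0 mulr1 malgUZ.
  by rewrite linear_sum; apply: eq_bigr => k _; rewrite linearZ /= Lk scalerA exprSr mulrA.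
rewrite /poly_act; under eq_bigr do rewrite iterF scaler_sumr.
rewrite exchange_big /=; apply: eq_bigr => k _.
rewrite horner_coef mulr_sumr scaler_suml; apply: eq_bigr => i _.
by rewrite scalerA mulrCA.
Qed.

Lemma diag_locally_finite (T : choiceType) (L : {linear {malg K[T]} -> {malg K[T]}})
    (lam : T -> K) :
  (forall k, L << k >> = lam k *: << k >>) -> locally_finite L.
Proof.
move=> Lk F; exists (\prod_(a <- [seq lam k | k <- msupp F]) ('X - a%:P)).
  exact/monic_neq0/monic_prod_XsubC.
rewrite (poly_act_diag _ _ Lk) big1_seq // => k kF.
have /rootP -> : root (\prod_(a <- [seq lam k | k <- msupp F]) ('X - a%:P)) (lam k).
  by rewrite root_prod_XsubC map_f.
by rewrite mulr0 scale0r.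
Qed.

End LocallyFinite.

Section CartanWeights.
Variables (K : fieldType) (n : nat).
Implicit Types (f g h F : Witt K n) (k : wkey n) (a b c : 'cV[int]_n) (d e : 'I_n -> K).

Definition xH c d : Witt K n := \sum_j d j *: wbasis K c j.

(* the eigenvalue of ad (xH 0 d) on x^c H_n *)
Definition hdot d c : K := \sum_j d j * (c j 0)%:~R.

Lemma hdot_is_zmod_morphism d : zmod_morphism (hdot d).
Proof.
by move=> x y; rewrite /hdot -sumrB; apply: eq_bigr => j _; rewrite !mxE intrB mulrBr.
Qed.

HB.instance Definition _ d := GRing.isZmodMorphism.Build _ _ (hdot d) (hdot_is_zmod_morphism d).

Lemma hdot_delta_mx d i : hdot d (delta_mx i 0) = d i.
Proof.
rewrite /hdot (bigD1 i) //= mxE !eqxx mulr1 big1 ?addr0 // => j /negbTE ji.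
by rewrite mxE ji mulr0.
Qed.

Lemma hdot_delta i c : hdot (fun j => (j == i)%:R) c = (c i 0)%:~R.
Proof.
rewrite /hdot (bigD1 i) //= eqxx mul1r big1 ?addr0 // => j /negbTE ->.
by rewrite mul0r.
Qed.

Lemma coef_xH c d k : (xH c d)@_k = if k.1 == c then d k.2 else 0.
Proof.
rewrite /xH raddf_sum /=; under eq_bigr do rewrite mcoeffZ mcoeffU.
case: k => b i /=; case: eqP => [->|ne].
  rewrite (bigD1 i) //= eqxx mulr1 big1 ?addr0 // => j /negbTE ji.
  by rewrite xpair_eqE eqxx ji mulr0.
by rewrite big1 // => j _; rewrite xpair_eqE; case: eqP => [cb|]; [case: ne | rewrite mulr0].
Qed.

Lemma degs_in_xH c d : degs_in (pred1 c) (xH c d).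
Proof.
move=> k; rewrite -mcoeff_neq0 coef_xH.
by case: (k.1 =P c) => [-> _|]; rewrite /= ?eqxx.
Qed.

Lemma in_xH_xH c g : in_xH c g -> g = xH c (fun j => g@_(c, j)).
Proof.
move=> cg; apply/malgP => k; rewrite coef_xH; case: eqP => [<-|ne].
  by rewrite -surjective_pairing.
by apply: mcoeff_outdom; apply: contra_notN ne => /cg.
Qed.

Lemma malgU_xH k : << k >> = xH k.1 (fun j => (j == k.2)%:R) :> Witt K n.
Proof.
apply/malgP => k'; rewrite mcoeffU coef_xH eq_sym.
by case: k k' => [b i] [b' i'] /=; rewrite xpair_eqE; case: eqP.
Qed.

Lemma wH_xH i : wH K i = xH 0 (fun j => (j == i)%:R).
Proof. by rewrite /wH /wbasis malgU_xH. Qed.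

Lemma wbr_wbasis_xH a i c e :
  wbr (wbasis K a i) (xH c e) =
  ((c i 0)%:~R : K) *: xH (a + c) e - hdot e a *: wbasis K (a + c) i.
Proof.
rewrite /xH wbr_sumr /hdot scaler_sumr scaler_suml -sumrB.
apply: eq_bigr => j _; rewrite wbrZr wbr_wbasis.
(* Rearranged in an abstract module: rewriting scalerA directly in Witt K n
   makes unification unfold the finite-map representation of the vectors. *)
have scalerBCA (V : lmodType K) x u v (p q : V) :
  x *: (u *: p - v *: q) = u *: (x *: p) - (x * v) *: q.
  by rewrite scalerBr !scalerA [x * u]mulrC.
exact: scalerBCA.
Qed.

Lemma wbr_xH a c d e :
  wbr (xH a d) (xH c e) = hdot d c *: xH (a + c) e - hdot e a *: xH (a + c) d.
Proof.
rewrite {1}/xH wbr_suml; under eq_bigr do rewrite wbrZl wbr_wbasis_xH.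
set X := xH (a + c) e; rewrite /hdot /xH scaler_suml scaler_sumr -sumrB.
apply: eq_bigr => i _.
have scalerBA (V : lmodType K) x u v (p q : V) :
  x *: (u *: p - v *: q) = (x * u) *: p - v *: (x *: q).
  by rewrite scalerBr !scalerA [x * v]mulrC.
exact: scalerBA.
Qed.

Lemma ad_cartanU d k : ad (xH 0 d) << k >> = hdot d k.1 *: << k >>.
Proof. by rewrite /ad {1}malgU_xH wbr_xH raddf0 scale0r subr0 add0r -malgU_xH. Qed.

Lemma coef_ad_cartan d F k : (ad (xH 0 d) F)@_k = hdot d k.1 * F@_k.
Proof.
rewrite {1}(monalgE F) linear_sum raddf_sum /=.
under eq_bigr do rewrite malgUZ linearZ /= ad_cartanU scalerA mcoeffZ mcoeffU.
have [kF|kF] := boolP (k \in msupp F).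
  rewrite (big_fsetD1 k) //= eqxx mulr1 big1_fset ?addr0 1?mulrC // => k'.
  by rewrite in_fsetD1 eq_sym => /andP[/negbTE -> _] _; rewrite mulr0.
rewrite (mcoeff_outdom kF) mulr0 big1_fset // => k' k'F _.
by case: eqP => [e|]; [rewrite -e k'F in kF | rewrite mulr0].
Qed.

Lemma ad_cartan_in_xH d c f : in_xH c f -> ad (xH 0 d) f = hdot d c *: f.
Proof.
move=> cf; apply/malgP => k; rewrite coef_ad_cartan mcoeffZ.
have [kf|kf] := boolP (k \in msupp f); first by rewrite (cf _ kf).
by rewrite (mcoeff_outdom kf) !mulr0.
Qed.

Lemma ad_cartan_locally_finite d : locally_finite (ad (xH 0 d)).
Proof. exact: diag_locally_finite (ad_cartanU d). Qed.

End CartanWeights.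

(* Such a b keeps the leading coefficients in iter_ad_lead_form nonzero. *)
Lemma exists_nonresonant (K : fieldType) (n : nat) (d : 'I_n -> K) (a : 'cV[int]_n) i0 :
  [pchar K] =i pred0 -> d i0 != 0 ->
  exists b, forall m, hdot d (b + a *+ m) != hdot d a.
Proof.
move=> /pcharf0P K0 di0; have [s0|s_neq0] := eqVneq (hdot d a) 0.
  by exists (delta_mx i0 0) => m; rewrite raddfD raddfMn /= s0 mul0rn addr0 hdot_delta_mx.
exists (a *+ 2) => m; rewrite -mulrnDr raddfMn /= addnC addn2 mulrSr -subr_eq0 addrK.
by rewrite -mulr_natl mulf_neq0 // K0.
Qed.

Lemma exists_max_rel (T : eqType) (lt : rel T) (s : seq T) x0 :
  (forall x y, x != y -> lt x y || lt y x) -> transitive lt -> x0 \in s ->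
  exists2 a, a \in s & forall x, x \in s -> (x == a) || lt x a.
Proof.
move=> lt_total lt_trans; elim: s x0 => // y s IH x0 _.
case: s IH => [_|z s IH]; first by exists y => [|x]; rewrite ?mem_head // inE => ->.
have [a as_ amax] := IH z (mem_head _ _).
have [->|ya] := eqVneq y a.
  by exists a => [|x]; rewrite ?mem_head // inE => /orP[->|/amax].
case/orP: (lt_total _ _ ya) => [ya_lt|ay].
  exists a => [|x]; first by rewrite inE as_ orbT.
  by rewrite inE => /orP[/eqP->|/amax]; rewrite ?ya_lt ?orbT.
exists y => [|x]; rewrite ?mem_head // inE => /orP[->//|/amax/orP[/eqP->|xa]].
  by rewrite ay orbT.
by rewrite (lt_trans _ _ _ xa ay) orbT.
Qed.

Section LeadingDegree.
Variables (K : fieldType) (n : nat) (lt : rel 'cV[int]_n).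
Hypotheses (ltxx : irreflexive lt) (lt_trans : transitive lt).
Hypothesis ltD2r : forall z x y, lt x y -> lt (x + z) (y + z).
Implicit Types (a b x y z w : 'cV[int]_n) (f h : Witt K n).

Let le x y := (x == y) || lt x y.

Let lt_le_trans x y z : lt x y -> le y z -> lt x z.
Proof. by move=> xy /orP[/eqP <-|]; last exact: lt_trans. Qed.

Let ltD2l z x y : lt x y -> lt (z + x) (z + y).
Proof. by rewrite ![z + _]addrC; apply: ltD2r. Qed.

Let lt_leD x y z w : lt x y -> le z w -> lt (x + z) (y + w).
Proof. by move=> xy /orP[/eqP <-|zw]; [apply: ltD2r | apply/(lt_trans (ltD2r z xy))/ltD2l]. Qed.

Let le_ltD x y z w : le x y -> lt z w -> lt (x + z) (y + w).
Proof. by move=> xy zw; rewrite addrC [y + w]addrC; apply: lt_leD. Qed.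

Let lt_le x y : lt x y -> le x y.
Proof. by move=> xy; rewrite /le xy orbT. Qed.

Lemma below_top_part a f :
  degs_in (le^~ a) f -> degs_in (lt^~ a) (f - xH a (fun j => f@_(a, j))).
Proof.
move=> fa k; rewrite -mcoeff_neq0 mcoeffB coef_xH.
case: (k.1 =P a) => [<-|ka]; first by rewrite -surjective_pairing subrr eqxx.
by rewrite subr0 mcoeff_neq0 => /fa /orP[/eqP|].
Qed.

Section Leading.
Variables (d : 'I_n -> K) (h : Witt K n) (a : 'cV[int]_n).
Hypothesis h_lead : degs_in (lt^~ a) (h - xH a d).

Definition lead_form b c f := degs_in (lt^~ b) (f - c *: xH b d).

Lemma coef_lead_form b c f j : lead_form b c f -> f@_(b, j) = c * d j.
Proof.
move=> fb; rewrite -[f](subrK (c *: xH b d)) mcoeffD (mcoeff_degs_out fb) ?ltxx //.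
by rewrite mcoeffZ coef_xH eqxx add0r.
Qed.

Lemma coef_lead_form_gt b c f y j : lead_form b c f -> lt b y -> f@_(y, j) = 0.
Proof.
move=> fb b_y; have y_b : y != b by apply: contraTneq b_y => ->; rewrite ltxx.
rewrite -[f](subrK (c *: xH b d)) mcoeffD (mcoeff_degs_out fb); last first.
  by apply/negP => /(lt_trans b_y); rewrite ltxx.
by rewrite mcoeffZ coef_xH /= (negbTE y_b) mulr0 add0r.
Qed.

Lemma ad_lead_form b c f :
  lead_form b c f -> lead_form (a + b) (c * (hdot d b - hdot d a)) (ad h f).
Proof.
rewrite /lead_form => fb.
have hr_low := h_lead; set hr := h - xH a d in hr_low; set r := f - c *: xH b d in fb.
have -> : ad h f =
    (wbr (xH a d) r + (c *: wbr hr (xH b d) + wbr hr r)) +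
    (c * (hdot d b - hdot d a)) *: xH (a + b) d.
  rewrite /ad -[h](subrK (xH a d)) -[f](subrK (c *: xH b d)) -/hr -/r.
  rewrite wbrDl !wbrDr !wbrZr wbr_xH.
  have regroup (V : lmodType K) (u1 u2 u3 X : V) (p q : K) :
      u1 + c *: u2 + (u3 + c *: (p *: X - q *: X)) =
      u3 + (c *: u2 + u1) + (c * (p - q)) *: X.
    by rewrite -scalerBl scalerA addrCA [u1 + _]addrC !addrA.
  exact: regroup.
rewrite addrK; apply: degs_inD; last apply: degs_inD.
- apply: (degs_in_wbr _ (degs_in_xH (c := a) (d := d)) fb) => x y /eqP -> yb.
  by apply: le_ltD; rewrite // /le eqxx.
- apply/degs_inZ/(degs_in_wbr _ hr_low (degs_in_xH (c := b) (d := d))) => x y xa /eqP ->.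
  by apply: lt_leD; rewrite // /le eqxx.
- by apply: (degs_in_wbr _ hr_low fb) => x y xa yb; apply: lt_leD xa (lt_le yb).
Qed.

Lemma iter_ad_lead_form b :
  (forall m, hdot d (b + a *+ m) != hdot d a) ->
  forall m, exists2 c, c != 0 & lead_form (b + a *+ m) c (iter m (ad h) (xH b d)).
Proof.
move=> nonres; elim=> [|m [c c0 fm]].
  by exists 1; rewrite ?oner_neq0 // /lead_form addr0 scale1r subrr => k; rewrite msupp0.
exists (c * (hdot d (b + a *+ m) - hdot d a)); first by rewrite mulf_neq0 ?subr_eq0.
by rewrite mulrS addrCA; apply: ad_lead_form.
Qed.

Lemma lt_shift b m1 m2 : lt 0 a -> (m1 < m2)%N -> lt (b + a *+ m1) (b + a *+ m2).
Proof.
move=> a0; elim: m2 => // m2 IH; rewrite ltnS leq_eqVlt => /orP[/eqP->|/IH m12].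
  by have := ltD2r (b + a *+ m2) a0; rewrite add0r mulrS addrCA.
apply: lt_trans m12 _; have := ltD2r (b + a *+ m2) a0.
by rewrite add0r mulrS addrCA.
Qed.

Lemma not_locally_finite i0 :
  [pchar K] =i pred0 -> d i0 != 0 -> lt 0 a -> ~ locally_finite (ad h).
Proof.
move=> K0 di0 a0 hfin; have [b nonres] := exists_nonresonant a K0 di0.
have [p p0 pb] := hfin (xH b d); set m := (size p).-1.
have sp : size p = m.+1 by rewrite prednK // size_poly_gt0.
have := congr1 (mcoeff (b + a *+ m, i0)) pb; rewrite mcoeff0 /poly_act raddf_sum /=.
rewrite sp big_ord_recr /= big1 => [|i _].
  have [c c0 fm] := iter_ad_lead_form nonres m.
  rewrite add0r mcoeffZ (coef_lead_form _ fm) => /eqP; apply/negP.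
  by rewrite !mulf_neq0 // /m -lead_coefE lead_coef_eq0.
have [c _ fi] := iter_ad_lead_form nonres i.
by rewrite mcoeffZ (coef_lead_form_gt _ fi (lt_shift b a0 (ltn_ord i))) mulr0.
Qed.

End Leading.

Hypothesis lt_total : forall x y, x != y -> lt x y || lt y x.

Lemma ad_locally_finite_deg h k :
  [pchar K] =i pred0 -> locally_finite (ad h) -> k \in msupp h -> ~~ lt 0 k.1.
Proof.
move=> K0 hfin kh; apply/negP => k_pos.
have [a /mapP[ka kah ->] amax] := exists_max_rel lt_total lt_trans (map_f (fun k => k.1) kh).
have h_le : degs_in (le^~ ka.1) h by move=> k' /(map_f (fun k => k.1)) /amax.
apply: (@not_locally_finite _ _ _ (below_top_part h_le) ka.2 K0 _ _ hfin).
- by rewrite -surjective_pairing mcoeff_neq0.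
- exact/(lt_le_trans k_pos)/amax/map_f.
Qed.

End LeadingDegree.

Definition lexlt (n : nat) (x y : 'cV[int]_n) : bool :=
  [exists i : 'I_n,
     [forall j : 'I_n, (j < i)%N ==> (x j 0 == y j 0)] && (x i 0 < y i 0)].

Section Lex.
Variable n : nat.
Implicit Types x y z : 'cV[int]_n.

Lemma lexlt_irr : irreflexive (@lexlt n).
Proof. by move=> x; apply/existsP => -[i /andP[_]]; rewrite ltxx. Qed.

Lemma lexlt_trans : transitive (@lexlt n).
Proof.
move=> y x z /existsP[i /andP[/forallP xy xy_i]] /existsP[j /andP[/forallP yz yz_j]].
have eq_xy (l : 'I_n) : (l < i)%N -> x l 0 = y l 0 by move/(implyP (xy l))/eqP.
have eq_yz (l : 'I_n) : (l < j)%N -> y l 0 = z l 0 by move/(implyP (yz l))/eqP.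
apply/existsP; case: (ltngtP i j) => [ij|ji|/val_inj ij].
- exists i; rewrite -(eq_yz _ ij) xy_i andbT; apply/forallP => l; apply/implyP => li.
  by rewrite eq_xy // eq_yz // (ltn_trans li ij).
- exists j; rewrite (eq_xy _ ji) yz_j andbT; apply/forallP => l; apply/implyP => lj.
  by rewrite eq_xy ?eq_yz // (ltn_trans lj ji).
- exists i; apply/andP; split; last by apply: lt_trans xy_i _; rewrite ij.
  by apply/forallP => l; apply/implyP => li; rewrite eq_xy ?eq_yz -?ij.
Qed.

Lemma lexltD2r z x y : lexlt x y -> lexlt (x + z) (y + z).
Proof.
case/existsP => i /andP[/forallP xy xy_i]; apply/existsP; exists i; rewrite !mxE ltrD2r xy_i andbT.
by apply/forallP => j; apply/implyP => /(implyP (xy j)) /eqP; rewrite !mxE => ->.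
Qed.

Lemma lexlt_total x y : x != y -> lexlt x y || lexlt y x.
Proof.
move=> /eqP xy; have [i0 xy_i0] : exists i, x i 0 != y i 0.
  apply/existsP; apply: contra_notT xy => /existsPn eq_xy.
  by apply/matrixP => i j; rewrite ord1; apply/eqP/negPn/eq_xy.
have [i xy_i i_min] :=
  @arg_minnP _ i0 (fun i : 'I_n => x i 0 != y i 0) (fun i : 'I_n => i : nat) xy_i0.
have eq_below : [forall j : 'I_n, (j < i)%N ==> (x j 0 == y j 0)].
  by apply/forallP => j; apply/implyP; apply: contraTT; rewrite -leqNgt => /i_min.
case/orP: (lt_total xy_i) => [lt_xy|lt_yx]; apply/orP; [left|right]; apply/existsP; exists i.
  by rewrite eq_below.
rewrite lt_yx andbT; apply/forallP => j; apply/implyP => ji.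
by rewrite eq_sym (implyP (forallP eq_below j) ji).
Qed.

End Lex.

Lemma ad_locally_finite_cartan (K : fieldType) (n : nat) (h : Witt K n) :
  [pchar K] =i pred0 -> locally_finite (ad h) -> in_xH 0 h.
Proof.
move=> K0 hfin k kh; apply/eqP.
have not_pos := ad_locally_finite_deg (@lexlt_irr n) (@lexlt_trans n) (@lexltD2r n)
  (@lexlt_total n) K0 hfin kh.
have lexgt_total (x y : 'cV[int]_n) : x != y -> lexlt y x || lexlt x y.
  by rewrite orbC; apply: lexlt_total.
have not_neg := ad_locally_finite_deg (lt := fun x y => lexlt y x) (@lexlt_irr n)
  (fun _ _ _ xy yz => lexlt_trans yz xy) (fun z x y => @lexltD2r n z y x)
  lexgt_total K0 hfin kh.
by apply: contraTT isT => /lexlt_total; rewrite (negbTE not_pos) (negbTE not_neg).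
Qed.

Lemma intr_inj_pchar0 (K : fieldType) : [pchar K] =i pred0 -> injective (intr : int -> K).
Proof.
move=> /pcharf0P K0 x y /eqP; rewrite -subr_eq0 -intrB => xy; apply/eqP; rewrite -subr_eq0.
by case: (x - y) xy => m; rewrite ?NegzE ?mulrNz ?oppr_eq0 -pmulrn K0.
Qed.

Lemma map_intr_inj_pchar0 (K : fieldType) (m n : nat) : [pchar K] =i pred0 ->
  injective (map_mx intr : 'M[int]_(m, n) -> 'M[K]_(m, n)).
Proof.
move=> K0 A B /matrixP AB; apply/matrixP => i j; apply: (intr_inj_pchar0 K0).
by have := AB i j; rewrite !mxE.
Qed.

Section LieAutomorphism.
Variables (K : fieldType) (n : nat).
Hypothesis K0 : [pchar K] =i pred0.
Implicit Types (s t : {linear Witt K n -> Witt K n}) (f : Witt K n).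

Lemma lie_hom_inv s t : cancel s t -> cancel t s -> lie_hom s -> lie_hom t.
Proof. by move=> sK tK shom f g; apply: (can_inj sK); rewrite shom !tK. Qed.

Lemma lie_hom_wH s t : cancel t s -> lie_hom s ->
  forall i, s (wH K i) = xH 0 (fun j => Amat s i j).
Proof.
move=> tK shom i.
have /in_xH_xH -> : in_xH 0 (s (wH K i)).
  apply: (ad_locally_finite_cartan K0).
  apply: (locally_finite_conj tK (L := ad (wH K i))) => [f|]; first exact: shom.
  by rewrite wH_xH; apply: ad_cartan_locally_finite.
by rewrite /xH; apply: eq_bigr => j _; rewrite mxE.
Qed.

Lemma Amat_mulV s t : cancel s t -> cancel t s -> lie_hom s -> Amat t *m Amat s = 1%:M.
Proof.
move=> sK tK shom; have thom := lie_hom_inv sK tK shom.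
apply/matrixP => i k; have := congr1 (mcoeff (0, k)) (tK (wH K i)).
rewrite (lie_hom_wH sK thom) wH_xH coef_xH eqxx /xH linear_sum raddf_sum /= => e.
rewrite !mxE eq_sym -e; apply: eq_bigr => j _.
by rewrite linearZ mcoeffZ !mxE.
Qed.

Lemma lie_hom_deg s t : cancel t s -> lie_hom s ->
  forall alpha f k, in_xH alpha f -> k \in msupp (s f) ->
  Amat s *m map_mx intr k.1 = map_mx intr alpha.
Proof.
move=> tK shom alpha f k fa kf; apply/matrixP => i z; rewrite (ord1 z) !mxE.
have : wbr (wH K i) f = (alpha i 0)%:~R *: f.
  by rewrite wH_xH -/(ad _ _) (ad_cartan_in_xH _ fa) hdot_delta.
move/(congr1 (mcoeff k \o s)); rewrite /= shom linearZ mcoeffZ (lie_hom_wH tK shom).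
rewrite -/(ad _ _) coef_ad_cartan => /mulIf; rewrite mcoeff_neq0 => /(_ kf) <-.
by rewrite /hdot; apply: eq_bigr => j _; rewrite !mxE.
Qed.

Lemma Amat_mul_intr s t : cancel s t -> cancel t s -> lie_hom s ->
  forall alpha, exists beta : 'cV[int]_n, Amat t *m map_mx intr alpha = map_mx intr beta.
Proof.
move=> sK tK shom alpha; have [n0|n_gt0] := posnP n.
  by exists alpha; apply/matrixP => i; have : (i < 0)%N by rewrite -[0%N]n0.
pose f := wbasis K alpha (Ordinal n_gt0).
have fa : in_xH alpha f by move=> k /(fsubsetP msuppU_le); rewrite inE => /eqP ->.
have [sf0|[k kf]] := fset_0Vmem (msupp (s f)).
  have sf_eq0 : s f = 0.
    by apply/malgP => k; rewrite mcoeff0 mcoeff_outdom // sf0 in_fset0.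
  have := congr1 (mcoeff (alpha, Ordinal n_gt0)) (sK f).
  by rewrite sf_eq0 linear0 mcoeff0 /f /wbasis mcoeffUU => /eqP; rewrite eq_sym oner_eq0.
exists k.1; rewrite -(lie_hom_deg tK shom fa kf) mulmxA.
by rewrite (Amat_mulV sK tK shom) mul1mx.
Qed.

End LieAutomorphism.

Theorem lemma2p6 (K : fieldType) (n : nat)
  (charK0 : [pchar K] =i pred0)
  (sigma sigmainv : {linear Witt K n -> Witt K n})
  (sK : cancel sigma sigmainv) (sK' : cancel sigmainv sigma)
  (shom : lie_hom sigma)
  (alpha : 'cV[int]_n) :
  exists beta : 'cV[int]_n,
    Amat sigmainv *m map_mx intr alpha = map_mx intr beta /\
    (forall g : Witt K n,
        in_xH beta g <-> exists2 f : Witt K n, in_xH alpha f & g = sigma f).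
Proof.
have thom := lie_hom_inv sK sK' shom.
have [beta Hbeta] := Amat_mul_intr charK0 sK sK' shom alpha.
have map_intr_inj := @map_intr_inj_pchar0 K n 1 charK0.
exists beta; split => // g; split => [gb | [f fa ->] k kf]; last first.
  apply: map_intr_inj; rewrite -Hbeta -(lie_hom_deg charK0 sK' shom fa kf) mulmxA.
  by rewrite (Amat_mulV charK0 sK sK' shom) mul1mx.
exists (sigmainv g) => [k kf|]; last by rewrite sK'.
have AA' := Amat_mulV charK0 sK' sK thom.
apply: map_intr_inj; rewrite -[LHS]mul1mx -AA' -mulmxA (lie_hom_deg charK0 sK thom gb kf).
by rewrite -Hbeta mulmxA AA' mul1mx.
Qed.
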